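(* Let $(\phi,y)$ be feasible and satisfy the modified condition (MC). Let $(\phi^\dagger,y^\dagger)$ be feasible with arrival rates $t^\dagger$ such that for every $i\in\mathcal V$ and $k\in\mathcal C$, either $y_i^\dagger(k)=y_i(k)$ or $t_i^\dagger(k)=t_i(k)$. Then $T(\phi,y)\le T(\phi^\dagger,y^\dagger)$, where $T(\phi,y)=\sum_{(i,j)\in\mathcal E}D_{ij}(F_{ij})+\sum_{i}B_i(Y_i)$.
   Context: Network model. $\mathcal G=(\mathcal V,\mathcal E)$ is a finite directed graph with $(j,i)\in\mathcal E$ whenever $(i,j)\in\mathcal E$; $\mathcal N(i)=\{j:(i,j)\in\mathcal E\}$. $\mathcal C$ is a finite catalog; item $k$ has nonempty designated server set $\mathcal S_k\subseteq\mathcal V$. Exogenous request rates $r_i(k)\ge0$. Variables: $\phi_{ij}(k)\in[0,1]$ with $\phi_{ij}(k)=0$ if $(i,j)\notin\mathcal E$, and $y_i(k)\in[0,1]$. Flow conservation: $y_i(k)+\sum_{j}\phi_{ij}(k)=1$ if $i\notin\mathcal S_k$ and $=0$ if $i\in\mathcal S_k$. A pair $(\phi,y)$ is feasible if it satisfies these constraints and the arrival rates $t_i(k)$, solving $t_i(k)=r_i(k)+\sum_j t_j(k)\phi_{ji}(k)$, are uniquely determined and nonnegative (e.g. when for each $k$ the graph with edges $\{(i,j):\phi_{ij}(k)>0\}$ is acyclic). $f_{ji}(k)=t_i(k)\phi_{ij}(k)$, $F_{ij}=\sum_k f_{ij}(k)$, $Y_i=\sum_k y_i(k)$. $D_{ij},B_i$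 are continuously differentiable, increasing, convex, zero at $0$. Marginal cost: $\frac{\partial T}{\partial r_i(k)}=\sum_{j\in\mathcal N(i)}\phi_{ij}(k)\big(D'_{ji}(F_{ji})+\frac{\partial T}{\partial r_j(k)}\big)$, zero if $i\in\mathcal S_k$ or $y_i(k)=1$. Modified condition (MC): with $\delta_i(k)=\min\{B_i'(Y_i)/t_i(k),\ \min_{j\in\mathcal N(i)}(D'_{ji}(F_{ji})+\frac{\partial T}{\partial r_j(k)})\}$ (where $B_i'(Y_i)/t_i(k):=\infty$ if $t_i(k)=0$), for all $i,k$: $B_i'(Y_i)=t_i(k)\delta_i(k)$ if $y_i(k)>0$, $B_i'(Y_i)\ge t_i(k)\delta_i(k)$ if $y_i(k)=0$; and for all $j\in\mathcal N(i)$, $D'_{ji}(F_{ji})+\frac{\partial T}{\partial r_j(k)}=\delta_i(k)$ if $\phi_{ij}(k)>0$, $\ge\delta_i(k)$ if $\phi_{ij}(k)=0$. *)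

From HB Require Import structures.
From mathcomp Require Import all_boot all_order all_algebra.
From mathcomp Require Import all_classical all_reals all_analysis.
Set Implicit Arguments. Unset Strict Implicit. Unset Printing Implicit Defensive.
Import Order.TTheory GRing.Theory Num.Theory numFieldNormedType.Exports.
Local Open Scope ring_scope.

Section Network.
Variables (R : realType) (V C : finType) (E : rel V) (S : C -> {set V})
  (r : V -> C -> R).

Definition cost_fun (f : R -> R) : Prop :=
  [/\ (forall x : R, derivable f x 1),
      continuous (derive1 f),
      (forall x z : R, x < z -> f x < f z),
      (forall (x z a : R), 0 <= a <= 1 ->
          f (a * x + (1 - a) * z) <= a * f x + (1 - a) * f z)
    & f 0 = 0].

Definition arrival_rates (phi : V -> V -> C -> R) (t : V -> C -> R) : Prop :=
  forall i k, t i k = r i k + \sum_(j : V) t j k * phi j i k.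

Definition feasible (phi : V -> V -> C -> R) (y : V -> C -> R) : Prop :=
  [/\ (forall i j k, 0 <= phi i j k <= 1),
      (forall i j k, ~~ E i j -> phi i j k = 0),
      (forall i k, 0 <= y i k <= 1)
    & (forall i k, y i k + \sum_(j : V) phi i j k
                     = (if i \in S k then 0 else 1))] /\
  [/\ (exists t, arrival_rates phi t),
      (forall t1 t2, arrival_rates phi t1 -> arrival_rates phi t2 -> t1 = t2)
    & (forall t, arrival_rates phi t -> forall i k, 0 <= t i k)].

(* F i j = F_{ij} = sum_k f_{ij}(k), with f_{ij}(k) = t_j(k) phi_{ji}(k). *)
Definition Flow (phi : V -> V -> C -> R) (t : V -> C -> R) (i j : V) : R :=
  \sum_(k : C) t j k * phi j i k.

Definition Ycache (y : V -> C -> R) (i : V) : R := \sum_(k : C) y i k.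

Definition total_cost (D : V -> V -> R -> R) (B : V -> R -> R)
  (phi : V -> V -> C -> R) (y : V -> C -> R) (t : V -> C -> R) : R :=
  \sum_(i : V) \sum_(j : V | E i j) D i j (Flow phi t i j)
  + \sum_(i : V) B i (Ycache y i).

(* dT i k stands for dT/dr_i(k): it satisfies the recursion of the paper. *)
Definition marginal_cost (D : V -> V -> R -> R)
  (phi : V -> V -> C -> R) (y : V -> C -> R) (t : V -> C -> R)
  (dT : V -> C -> R) : Prop :=
  forall i k, dT i k =
    if (i \in S k) || (y i k == 1) then 0
    else \sum_(j : V | E i j)
           phi i j k * (derive1 (D j i) (Flow phi t j i) + dT j k).

(* delta_i(k), valued in the extended reals; B'/t := +oo when t = 0,
   and the min over an empty neighbourhood is +oo. *)
Definition delta (D : V -> V -> R -> R) (B : V -> R -> R)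
  (phi : V -> V -> C -> R) (y : V -> C -> R) (t : V -> C -> R)
  (dT : V -> C -> R) (i : V) (k : C) : \bar R :=
  Order.min (if t i k == 0 then +oo%E else (derive1 (B i) (Ycache y i) / t i k)%:E)
            (\big[Order.min/+oo%E]_(j : V | E i j)
                (derive1 (D j i) (Flow phi t j i) + dT j k)%:E).

Definition modified_condition (D : V -> V -> R -> R) (B : V -> R -> R)
  (phi : V -> V -> C -> R) (y : V -> C -> R) (t : V -> C -> R)
  (dT : V -> C -> R) : Prop :=
  forall i k,
    let d := delta D B phi y t dT i k in
    [/\ (0 < y i k -> (derive1 (B i) (Ycache y i))%:E = ((t i k)%:E * d)%E),
        (y i k = 0 -> ((t i k)%:E * d <= (derive1 (B i) (Ycache y i))%:E)%E)
      & (forall j, E i j ->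
          (0 < phi i j k ->
             (derive1 (D j i) (Flow phi t j i) + dT j k)%:E = d)
          /\ (phi i j k = 0 ->
             (d <= (derive1 (D j i) (Flow phi t j i) + dT j k)%:E)%E))].

End Network.

From HB Require Import structures.
From mathcomp Require Import all_boot all_order all_algebra.
From mathcomp Require Import all_classical all_reals all_analysis.
From mathcomp Require Import ring lra.
Import Order.TTheory GRing.Theory Num.Theory numFieldNormedType.Exports.
Local Open Scope ring_scope.

(* By convexity of the costs, T(phi^+, y^+) - T(phi, y) is at least the first-order
   variation  sum D'_ij(F_ij) (F^+_ij - F_ij) + sum B'_i(Y_i) (Y^+_i - Y_i).
   Expressing the new flows through the new arrival rates and expanding dT/dr_i(k)
   by its recursion, the terms dT/dr_j(k) telescope thanks to flow conservation
   t_j = r_j + sum_i t_i phi_ij, so the variation splits into one term per (i, k):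
     t^+_i(k) (sum_j phi^+_ij(k) (D'_ji + dT/dr_j(k)) - dT/dr_i(k)) + B'_i (y^+_i(k) - y_i(k)).
   Under (MC) such a term is at least (B'_i - t^+_i(k) delta_i(k)) (y^+_i(k) - y_i(k)),
   which is nonnegative because either y^+_i(k) = y_i(k) or t^+_i(k) = t_i(k). *)

Set Implicit Arguments.
Unset Strict Implicit.

Lemma convex_tangent (R : realType) (f : R -> R) (x z : R) :
  derivable f x 1 ->
  (forall a, 0 <= a <= 1 -> f (a * x + (1 - a) * z) <= a * f x + (1 - a) * f z) ->
  f x + derive1 f x * (z - x) <= f z.
Proof.
move=> dfx cvx; set v := z - x.
have /cvg_ex[l ql] := @diff_derivable _ _ _ f x v ((derivable1_diffP _ _).1 dfx).
have -> : derive1 f x * v = l.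
  rewrite (_ : _ * v = 'D_v f x); first exact: cvg_lim.
  by rewrite deriveE -?derivable1_diffP // deriv1E // mulrC.
suff : l <= f z - f x by lra.
apply: (cvgr_to_le (cvg_dnbhs_at_right ql)); near=> h.
have h0 : 0 < h by near: h; exact: nbhs_right_gt.
have h1 : h <= 1 by near: h; exact: nbhs_right_le.
have seg : f (h * v + x) <= (1 - h) * f x + h * f z.
  have := cvx (1 - h); rewrite subKr.
  have -> : (1 - h) * x + h * z = h * v + x by rewrite /v; ring.
  by apply; lra.
rewrite /= [_ *: v]/(h * v) /shift /= ler_pdivrMl //; lra.
Unshelve. all: by end_near.
Qed.

Lemma cost_fun_tangent (R : realType) (f : R -> R) (x z : R) :
  cost_fun f -> f x + derive1 f x * (z - x) <= f z.
Proof. by case=> df _ _ cvx _; exact: convex_tangent (df x) (cvx x z). Qed.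

Lemma cache_tradeoff_ge0 (R : realDomainType) (b d y yd tt ttd : R) :
  tt * d <= b -> (0 < y -> b = tt * d) -> 0 <= y -> 0 <= yd ->
  yd = y \/ ttd = tt -> 0 <= (b - ttd * d) * (yd - y).
Proof.
move=> tdb bty y_ge0 yd_ge0 [->|->]; first by rewrite subrr mulr0.
have [y0|y_gt0] := eqVneq y 0; last by rewrite bty ?lt0r ?y_gt0 // subrr mul0r.
by rewrite y0 subr0 mulr_ge0 // subr_ge0.
Qed.

Section MarginalCostOptimality.
Variables (R : realType) (V C : finType) (E : rel V) (S : C -> {set V}).
Variables (r : V -> C -> R) (D : V -> V -> R -> R) (B : V -> R -> R).

Lemma sum_arrivals_forwarded phi t : arrival_rates r phi t ->
  forall j k, \sum_i t i k * phi i j k = t j k - r j k.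
Proof. by move=> art j k; rewrite [t j k]art addrC addKr. Qed.

Section Reference.
Variables (phi : V -> V -> C -> R) (y t dT : V -> C -> R).
Hypotheses (feas : feasible E S r phi y) (art : arrival_rates r phi t).
Hypotheses (mc : marginal_cost E S D phi y t dT)
  (MC : modified_condition E D B phi y t dT).

Let phi_ge0 i j k : 0 <= phi i j k.
Proof. by case: feas => [[/(_ i j k)/andP[]]]. Qed.

Let phi_notE i j k : ~~ E i j -> phi i j k = 0.
Proof. by case: feas => [[_ /(_ i j k)]]. Qed.

Let y_ge0 i k : 0 <= y i k.
Proof. by case: feas => [[_ _ /(_ i k)/andP[]]]. Qed.

Let phi_cons i k : y i k + \sum_j phi i j k = if i \in S k then 0 else 1.
Proof. by case: feas => [[_ _ _ /(_ i k)]]. Qed.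

Definition fwd_cost i j k := derive1 (D j i) (Flow phi t j i) + dT j k.

Definition marginal_storage i := derive1 (B i) (Ycache y i).

Local Notation δ := (delta E D B phi y t dT).

Lemma marginal_cost_fwd i k : dT i k = \sum_j phi i j k * fwd_cost i j k.
Proof.
rewrite mc; case: ifP => [no_fwd|_].
  have sum_phi0 : \sum_j phi i j k = 0.
    have := phi_cons i k; have := y_ge0 i k.
    have : 0 <= \sum_j phi i j k by exact: sumr_ge0.
    by case/orP: no_fwd => [-> | /eqP ->] /=; [lra | case: ifP => _; lra].
  have /psumr_eq0P phi0 := sum_phi0.
  by rewrite big1 // => j _; rewrite phi0 ?mul0r.
rewrite [RHS](bigID (E i)) /= [X in _ = _ + X]big1 ?addr0 //.
by move=> j /phi_notE ->; rewrite mul0r.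
Qed.

Lemma delta_le_fwd_cost i j k : E i j -> (δ i k <= (fwd_cost i j k)%:E)%E.
Proof.
move=> Eij; have [_ _ /(_ j Eij)[eq_pos le_zero]] := MC i k.
have [/le_zero //|phi_neq0] := eqVneq (phi i j k) 0.
by rewrite eq_pos // lt0r phi_neq0 phi_ge0.
Qed.

Lemma delta_neq_ninfty i k : δ i k != -oo%E.
Proof.
have minP (a b : \bar R) : a != -oo%E -> b != -oo%E -> Order.min a b != -oo%E.
  by rewrite /Order.min; case: ifP.
apply: (minP); first by case: ifP.
by apply: (big_ind (fun e : \bar R => e != -oo%E)) => //; exact: minP.
Qed.

Lemma delta_real i j k : E i j -> exists d : R, δ i k = d%:E.
Proof.
move=> /(@delta_le_fwd_cost _ _ k); have := delta_neq_ninfty i k.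
by case: (δ i k) => [d| |] // _ _; exists d.
Qed.

Section RealDelta.
Variables (i : V) (k : C) (d : R).
Hypothesis delta_d : δ i k = d%:E.

Lemma fwd_cost_weighted_delta :
  \sum_j phi i j k * fwd_cost i j k = d * \sum_j phi i j k.
Proof.
rewrite mulr_sumr; apply: eq_bigr => j _; rewrite mulrC.
have [Eij|/phi_notE->] := boolP (E i j); last by rewrite !mulr0.
have [_ _ /(_ j Eij)[eq_pos _]] := MC i k.
have [->|phi_neq0] := eqVneq (phi i j k) 0; first by rewrite !mulr0.
congr (_ * _); apply: EFin_inj; rewrite -delta_d eq_pos //.
by rewrite lt0r phi_neq0 phi_ge0.
Qed.

Lemma storage_delta :
  t i k * d <= marginal_storage i /\ (0 < y i k -> marginal_storage i = t i k * d).
Proof.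
have [eq_pos le_zero _] := MC i k; rewrite delta_d in eq_pos le_zero.
have eq_pos' : 0 < y i k -> marginal_storage i = t i k * d.
  by move=> y_gt0; apply: EFin_inj; rewrite EFinM eq_pos.
split=> //; have [/le_zero|y_neq0] := eqVneq (y i k) 0.
  by rewrite -EFinM lee_fin.
by rewrite eq_pos' // lt0r y_neq0 y_ge0.
Qed.

End RealDelta.

Section Alternative.
Variables (phid : V -> V -> C -> R) (yd td : V -> C -> R).
Hypotheses (feasd : feasible E S r phid yd) (artd : arrival_rates r phid td).

Let phid_ge0 i j k : 0 <= phid i j k.
Proof. by case: feasd => [[/(_ i j k)/andP[]]]. Qed.

Let phid_notE i j k : ~~ E i j -> phid i j k = 0.
Proof. by case: feasd => [[_ /(_ i j k)]]. Qed.

Let yd_ge0 i k : 0 <= yd i k.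
Proof. by case: feasd => [[_ _ /(_ i k)/andP[]]]. Qed.

Let phid_cons i k : yd i k + \sum_j phid i j k = if i \in S k then 0 else 1.
Proof. by case: feasd => [[_ _ _ /(_ i k)]]. Qed.

Let td_ge0 i k : 0 <= td i k.
Proof. by case: feasd => [_ [_ _ /(_ td artd)]]. Qed.

Lemma fwd_cost_weighted_ge i k d : δ i k = d%:E ->
  d * \sum_j phid i j k <= \sum_j fwd_cost i j k * phid i j k.
Proof.
move=> delta_d; rewrite mulr_sumr; apply: ler_sum => j _.
have [Eij|/phid_notE->] := boolP (E i j); last by rewrite !mulr0.
by rewrite -subr_ge0 -mulrBl mulr_ge0 // subr_ge0 -lee_fin -delta_d delta_le_fwd_cost.
Qed.

Definition local_variation i k :=
  td i k * (\sum_j fwd_cost i j k * phid i j k - dT i k)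
  + marginal_storage i * (yd i k - y i k).

Lemma local_variation_ge0 i k :
  yd i k = y i k \/ td i k = t i k -> 0 <= local_variation i k.
Proof.
move=> yd_or_td; have cons := phi_cons i k; have cons_d := phid_cons i k.
rewrite /local_variation marginal_cost_fwd.
case: (pickP (fun j => (0 < phi i j k) || (0 < phid i j k))) => [j0 j0_pos|no_pos].
  have Ej0 : E i j0.
    by apply: contraLR j0_pos => /[dup] /phi_notE-> /phid_notE->; rewrite ltxx.
  have [d delta_d] := delta_real k Ej0.
  have [tdB Bty] := storage_delta delta_d.
  have fwd_ge := fwd_cost_weighted_ge delta_d.
  have := cache_tradeoff_ge0 (ttd := td i k) tdB Bty (y_ge0 i k) (yd_ge0 i k) yd_or_td.
  rewrite (fwd_cost_weighted_delta delta_d).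
  have := ler_wpM2l (td_ge0 i k) fwd_ge.
  move: cons cons_d; case: ifP => _; nra.
have phi0 j : phi i j k = 0.
  by apply/eqP; rewrite eq_le phi_ge0 andbT leNgt; case/norP: (negbT (no_pos j)).
have phid0 j : phid i j k = 0.
  by apply/eqP; rewrite eq_le phid_ge0 andbT leNgt; case/norP: (negbT (no_pos j)).
rewrite !big1 => [|j _|j _]; rewrite ?phi0 ?phid0 ?mulr0 ?mul0r //.
move: cons cons_d; rewrite !big1 // => <-; rewrite !addr0 => ->.
by rewrite !subrr !mulr0 addr0.
Qed.

Definition cost_variation :=
  \sum_i \sum_(j | E i j)
     derive1 (D i j) (Flow phi t i j) * (Flow phid td i j - Flow phi t i j)
  + \sum_i marginal_storage i * (Ycache yd i - Ycache y i).

Lemma total_cost_ge_variation :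
  (forall i j, E i j -> cost_fun (D i j)) -> (forall i, cost_fun (B i)) ->
  total_cost E D B phi y t + cost_variation <= total_cost E D B phid yd td.
Proof.
move=> Dcf Bcf; rewrite /total_cost /cost_variation addrACA.
apply: lerD; rewrite -big_split; apply: ler_sum => i _ /=.
  rewrite -big_split; apply: ler_sum => j Eij /=.
  exact: cost_fun_tangent (Dcf i j Eij).
exact: cost_fun_tangent (Bcf i).
Qed.

Lemma flow_variation_local k :
  \sum_i \sum_j derive1 (D j i) (Flow phi t j i)
                * (td i k * phid i j k - t i k * phi i j k)
  = \sum_i td i k * (\sum_j fwd_cost i j k * phid i j k - dT i k).
Proof.
have arrivals : \sum_i \sum_j dT j k * (td i k * phid i j k - t i k * phi i j k)
    = \sum_i dT i k * (td i k - t i k).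
  rewrite exchange_big; apply: eq_bigr => j _.
  by rewrite -mulr_sumr sumrB !sum_arrivals_forwarded //; congr (_ * _); ring.
transitivity (\sum_i (td i k * \sum_j fwd_cost i j k * phid i j k - t i k * dT i k)
    - \sum_i \sum_j dT j k * (td i k * phid i j k - t i k * phi i j k)).
  rewrite -sumrB; apply: eq_bigr => i _.
  rewrite [dT i k]marginal_cost_fwd !mulr_sumr -!sumrB.
  by apply: eq_bigr => j _; rewrite /fwd_cost; ring.
by rewrite arrivals -sumrB; apply: eq_bigr => i _; ring.
Qed.

Lemma cost_variation_local : (forall i j, E i j -> E j i) ->
  cost_variation = \sum_i \sum_k local_variation i k.
Proof.
move=> symE.
have flow_term : \sum_i \sum_(j | E i j) derive1 (D i j) (Flow phi t i j)
                      * (Flow phid td i j - Flow phi t i j)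
    = \sum_k \sum_i \sum_j derive1 (D j i) (Flow phi t j i)
                      * (td i k * phid i j k - t i k * phi i j k).
  transitivity (\sum_i \sum_j derive1 (D i j) (Flow phi t i j)
                  * (Flow phid td i j - Flow phi t i j)).
    apply: eq_bigr => i _; rewrite [RHS](bigID (E i)) /=.
    rewrite [X in _ = _ + X]big1 ?addr0 // => j notEij.
    have notEji : ~~ E j i by apply: contra notEij; exact: symE.
    by rewrite /Flow !big1 ?subrr ?mulr0 // => k _; rewrite ?phi_notE ?phid_notE ?mulr0.
  rewrite exchange_big [RHS]exchange_big; apply: eq_bigr => i _.
  rewrite [RHS]exchange_big; apply: eq_bigr => j _.
  by rewrite /Flow -sumrB mulr_sumr.
have storage_term : \sum_i marginal_storage i * (Ycache yd i - Ycache y i)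
    = \sum_i \sum_k marginal_storage i * (yd i k - y i k).
  by apply: eq_bigr => i _; rewrite /Ycache -sumrB mulr_sumr.
rewrite /cost_variation flow_term storage_term.
rewrite (eq_bigr _ (fun k _ => flow_variation_local k)) exchange_big -big_split.
by apply: eq_bigr => i _; rewrite -big_split.
Qed.

Lemma total_cost_le :
  (forall i j, E i j -> E j i) ->
  (forall i j, E i j -> cost_fun (D i j)) -> (forall i, cost_fun (B i)) ->
  (forall i k, yd i k = y i k \/ td i k = t i k) ->
  total_cost E D B phi y t <= total_cost E D B phid yd td.
Proof.
move=> symE Dcf Bcf yd_or_td.
apply: le_trans (total_cost_ge_variation Dcf Bcf).
rewrite lerDl cost_variation_local //.
by apply: sumr_ge0 => i _; apply: sumr_ge0 => k _; exact: local_variation_ge0.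
Qed.

End Alternative.
End Reference.
End MarginalCostOptimality.

Unset Implicit Arguments.

Theorem corollary2 (R : realType) (V C : finType) (E : rel V)
  (S : C -> {set V}) (r : V -> C -> R)
  (D : V -> V -> R -> R) (B : V -> R -> R)
  (phi phid : V -> V -> C -> R) (y yd : V -> C -> R)
  (t td dT : V -> C -> R) :
  (forall i j, E i j -> E j i) ->
  (forall k, S k != finset.set0) ->
  (forall i k, 0 <= r i k) ->
  (forall i j, E i j -> cost_fun (D i j)) ->
  (forall i, cost_fun (B i)) ->
  feasible E S r phi y ->
  arrival_rates r phi t ->
  marginal_cost E S D phi y t dT ->
  modified_condition E D B phi y t dT ->
  feasible E S r phid yd ->
  arrival_rates r phid td ->
  (forall i k, yd i k = y i k \/ td i k = t i k) ->
  total_cost E D B phi y t <= total_cost E D B phid yd td.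
Proof.
move=> symE _ _ Dcf Bcf feas art mc MC feasd artd yd_or_td.
exact: (total_cost_le feas art mc MC feasd artd symE Dcf Bcf yd_or_td).
Qed.
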